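(* Let $G=(V,E)$ be a graph, let $\mathcal{M}$ be a nontrivial, unbounded graph matroid family with dimensionality $d$, and let $k\ge2$ be an integer. If $\mathcal{M}(G)$ is vertically $k$-connected, then the minimum degree of $G$ is at least $k+d-1$. In particular, $|V|\ge k+d$.
   Context: All graphs are finite and simple and have no isolated vertices. A graph matroid family $\mathcal{M}$ assigns to every graph $G$ a matroid $\mathcal{M}(G)$ on $E(G)$ such that (i) every graph isomorphism $V(G)\to V(H)$ induces an isomorphism $\mathcal{M}(G)\to\mathcal{M}(H)$, and (ii) for every subgraph $H$ of $G$, $\mathcal{M}(H)$ is the restriction of $\mathcal{M}(G)$ to $E(H)$. $r(G)$ is the rank of $\mathcal{M}(G)$. $\mathcal{M}$ is nontrivial if some graph $G$ has $r(G)<|E(G)|$, unbounded if $r(K_n)$ is unbounded. An $\mathcal{M}$-circuit is a graph $C$ with $r(C)<|E(C)|$ and $r(C-e)=|E(C)|-1$ for all edges $e$; the dimensionality $d$ is the minimum over $\mathcal{M}$-circuits of (minimum degree $-1$). For a matroid with rank function $r$ on ground set $E$ and positive integer $k$, a bipartition $(E_1,E_2)$ of $E$ is a vertical $k$-separation if $r(E_1),r(E_2)\ge k$ and $r(E_1)+r(E_2)\le r(E)+k-1$; the matroid is vertically $k$-connected if its rank is at least $k$ and it has no vertical $k'$-separation for any positive integer $k'<k$. *)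

From mathcomp Require Import all_boot all_order.
From mathcomp Require Import finmap.
Set Implicit Arguments. Unset Strict Implicit. Unset Printing Implicit Defensive.
Local Open Scope fset_scope.

(* A graph (finite, simple, no isolated vertices) is given by its edge set:
   a finite set of 2-element subsets of nat. Its vertex set is the union
   of its edges. *)
Definition edge := {fset nat}.
Definition graph := {fset edge}.

Definition is_graph (G : graph) : Prop := forall e, e \in G -> #|` e| = 2.

Definition verts (G : graph) : {fset nat} := \bigcup_(e <- G) e.

Definition deg (G : graph) (v : nat) : nat := #|` [fset e in G | v \in e]|.

Definition gimg (f : nat -> nat) (X : graph) : graph :=
  (fun e : edge => f @` e) @` X.

Definition Kn (n : nat) : graph :=
  (fun p : nat * nat => [fset p.1; p.2]) @` [fset p | p in [seq p <- allpairs pair (iota 0 n) (iota 0 n) | p.1 < p.2]].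

Definition matroid_rank (E : graph) (r : graph -> nat) : Prop :=
  [/\ (forall X, X `<=` E -> r X <= #|` X|),
      (forall X Y, X `<=` Y -> Y `<=` E -> r X <= r Y) &
      (forall X Y, X `<=` E -> Y `<=` E -> r (X `|` Y) + r (X `&` Y) <= r X + r Y)].

(* A graph matroid family: M G is the rank function of the matroid M(G) on E(G). *)
Definition graph_matroid_family (M : graph -> graph -> nat) : Prop :=
  [/\ (forall G, is_graph G -> matroid_rank G (M G)),
      (* (i) isomorphism invariance: a bijection V(G) -> V(H) preserving edges,
         H being the image graph *)
      (forall G (f : nat -> nat), is_graph G -> {in verts G &, injective f} ->
         forall X, X `<=` G -> M (gimg f G) (gimg f X) = M G X) &
      (forall G H, is_graph G -> H `<=` G ->
         forall X, X `<=` H -> M H X = M G X)].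

Definition grank (M : graph -> graph -> nat) (G : graph) : nat := M G G.

Definition nontrivial (M : graph -> graph -> nat) : Prop :=
  exists G, is_graph G /\ grank M G < #|` G|.

Definition unbounded (M : graph -> graph -> nat) : Prop :=
  forall b, exists n, b < grank M (Kn n).

Definition is_circuit (M : graph -> graph -> nat) (C : graph) : Prop :=
  [/\ is_graph C, grank M C < #|` C| &
      forall e, e \in C -> grank M (C `\ e) = (#|` C|).-1].

Definition mindeg_ge (G : graph) (m : nat) : Prop :=
  forall v, v \in verts G -> m <= deg G v.

Definition mindeg_eq (G : graph) (m : nat) : Prop :=
  mindeg_ge G m /\ exists2 v, v \in verts G & deg G v = m.

Definition dimensionality (M : graph -> graph -> nat) (d : nat) : Prop :=
  (exists C, is_circuit M C /\ mindeg_eq C d.+1) /\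
  (forall C m, is_circuit M C -> mindeg_eq C m -> d.+1 <= m).

Definition vert_sep (E : graph) (r : graph -> nat) (k : nat) (E1 E2 : graph) : Prop :=
  [/\ E1 `|` E2 = E, E1 `&` E2 = fset0, k <= r E1, k <= r E2 &
      r E1 + r E2 <= r E + k - 1].

Definition vert_connected (E : graph) (r : graph -> nat) (k : nat) : Prop :=
  k <= r E /\ forall k' E1 E2, 0 < k' < k -> ~ vert_sep E r k' E1 E2.

From mathcomp Require Import all_boot all_order.
From mathcomp Require Import finmap.
From mathcomp Require Import zify.
Set Implicit Arguments. Unset Strict Implicit. Unset Printing Implicit Defensive.
Local Open Scope fset_scope.

(* Let v have minimum degree D and let S be its star.  Every circuit has minimum degree at
   least d + 1, so an edge at a vertex of degree at most d is a coloop; hence deleting S costs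
   at least min(D, d) in rank, while r(S) <= D; and when d >= 2, an edge at a neighbour of v
   that avoids v is not spanned by S.  If D < k + d - 1, the pair (S, E - S) is then a vertical
   k'-separation with k' < k.  Finally d >= 1: a circuit with a pendant edge uw, relabelled so
   that uw becomes any new edge of K_(n+1), shows that K_n spans K_(n+1) for large n, which
   would bound the rank of all complete graphs. *)

Definition spans (r : graph -> nat) (A : graph) (g : edge) : Prop := r (g |` A) = r A.

Definition circuit (r : graph -> nat) (C : graph) : Prop :=
  r C < #|` C| /\ forall f, f \in C -> r (C `\ f) = (#|` C|).-1.

Section MatroidRank.

Variables (E : graph) (r : graph -> nat).
Hypothesis hr : matroid_rank E r.

Lemma rank_le_card X : X `<=` E -> r X <= #|` X|.
Proof. by case: hr => h _ _; apply: h. Qed.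

Lemma rank_mono X Y : X `<=` Y -> Y `<=` E -> r X <= r Y.
Proof. by case: hr => _ h _; apply: h. Qed.

Lemma rank_submod X Y : X `<=` E -> Y `<=` E ->
  r (X `|` Y) + r (X `&` Y) <= r X + r Y.
Proof. by case: hr => _ _ h; apply: h. Qed.

Lemma rank_fsetU_le X Y : X `<=` E -> Y `<=` E -> r (X `|` Y) <= r X + r Y.
Proof. by move=> XE YE; apply: leq_trans (rank_submod XE YE); apply: leq_addr. Qed.

Lemma rank_fset1U_le X g : X `<=` E -> g \in E -> r (g |` X) <= (r X).+1.
Proof.
move=> XE gE; have gE' : [fset g] `<=` E by rewrite fsub1set.
rewrite -add1n; apply: leq_trans (rank_fsetU_le gE' XE) _.
by rewrite leq_add2r -(cardfs1 g); apply: rank_le_card.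
Qed.

Lemma spans_mem A g : g \in A -> spans r A g.
Proof. by move=> gA; rewrite /spans mem_fset1U. Qed.

Lemma spansS A B g : A `<=` B -> B `<=` E -> g \in E -> spans r A g -> spans r B g.
Proof.
move=> AB BE gE hA; have AE := fsubset_trans AB BE.
have gAE : g |` A `<=` E by rewrite fsubUset fsub1set gE.
have gBE : g |` B `<=` E by rewrite fsubUset fsub1set gE.
have := rank_submod BE gAE.
rewrite fsetUCA (fsetUidPl _ _ AB).
have : r A <= r (B `&` (g |` A)).
  by apply: rank_mono; rewrite ?fsubsetI ?AB ?fsubsetU1 // fsubIset // BE.
have : r B <= r (g |` B) by apply: rank_mono; rewrite ?fsubsetU1.
rewrite /spans in hA *; lia.
Qed.

Lemma rank_fsetU_spans A Y : A `<=` E -> Y `<=` E -> {in Y, forall g, spans r A g} ->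
  r (A `|` Y) = r A.
Proof.
move=> AE; elim/fset1U_rect: Y => [|g Y _ IH]; first by rewrite fsetU0.
rewrite fsubUset fsub1set => /andP[gE YE] hY.
have AYE : A `|` Y `<=` E by rewrite fsubUset AE.
rewrite fsetUCA -[RHS](IH YE); last by move=> h hY'; apply: hY; rewrite fset1Ur.
by apply: spansS (fsubsetUl A Y) AYE gE _; apply: hY; rewrite fset1U1.
Qed.

(* Peeling off the coloops one at a time loses one unit of rank each time, by submodularity. *)
Lemma card_le_rank_coloops S : S `<=` E -> {in S, forall f, r (S `\ f) < r S} ->
  #|` S| <= r S.
Proof.
move=> SE hS.
suff: forall T, T `<=` S -> r (S `\` T) + #|` T| <= r S.
  by move/(_ S (fsubset_refl _)); rewrite fsetDv; lia.
elim/fset1U_rect => [|g T gT IH]; first by rewrite fsetD0 cardfs0 addn0.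
rewrite fsubUset fsub1set => /andP[gS /IH hT].
have := rank_submod (fsubset_trans (fsubsetDl S T) SE) (fsubset_trans (fsubD1set S g) SE).
have -> : (S `\` T) `|` (S `\ g) = S.
  apply/fsetP => z; rewrite !inE; case: (z =P g) => [->|_]; rewrite ?gT ?gS //=.
  by case: (z \in S); rewrite ?andbT ?andbF ?orbT.
have -> : (S `\` T) `&` (S `\ g) = S `\` (g |` T).
  by apply/fsetP => z; rewrite !inE; case: (z == g); case: (z \in T); case: (z \in S).
rewrite cardfsU1 gT.
have := hS g gS; lia.
Qed.

Lemma circuit_spans C f : C `<=` E -> circuit r C -> f \in C -> spans r (C `\ f) f.
Proof.
move=> CE [hC hCf] fC; rewrite /spans fsetD1K //.
apply/eqP; rewrite eqn_leq (rank_mono (fsubD1set C f) CE) andbT hCf //.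
by rewrite -ltnS (ltn_predK hC).
Qed.

(* Strong induction on [#|` X|]: either some [f != e] can be deleted from [X] while keeping [e]
   a non-coloop, or [X] itself is a circuit. *)
Lemma circuit_of_not_coloop X e : X `<=` E -> e \in X -> r X <= r (X `\ e) ->
  exists C, [/\ C `<=` X, e \in C & circuit r C].
Proof.
elim: {X}#|` X|.+1 {-2}X (ltnSn #|` X|) => // n IH X Xn XE eX hX.
have [/hasP[f fX /andP[fe hf]] | /hasPn noF] :=
  boolP (has (fun f => (f != e) && (r (X `\ f) <= r (X `\ f `\ e))) X).
  have [||||C [CX eC hC]] := IH (X `\ f).
  - by move: Xn; rewrite (cardfsD1 f X) fX.
  - exact: fsubset_trans (fsubD1set X f) XE.
  - by rewrite !inE eq_sym fe.
  - exact: hf.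
  by exists C; split => //; apply: fsubset_trans CX (fsubD1set X f).
set S := X `\ e.
have SE : S `<=` E := fsubset_trans (fsubD1set X e) XE.
have cardX : #|` X| = #|` S|.+1 by rewrite (cardfsD1 e X) eX.
have XfeE f : X `\ f `\ e = S `\ f by rewrite !fsetDDl fsetUC.
have coloopS : {in S, forall f, r (S `\ f) < r S}.
  move=> f; rewrite in_fsetD1 => /andP[fe fX]; move: (noF f fX); rewrite fe XfeE -ltnNge => hf.
  rewrite ltnNge; apply/negP => hSf; move: hf; rewrite ltnNge; apply/negP/negPn.
  apply: leq_trans (leq_trans hX hSf).
  by apply: rank_mono; rewrite ?fsubD1set.
have rS : r S = #|` S| by apply/eqP; rewrite eqn_leq rank_le_card // card_le_rank_coloops.
exists X; split => //; split=> [|f fX]; first by rewrite cardX -rS ltnS.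
rewrite cardX /=; case: (f =P e) => [-> // | /eqP fe].
have fS : f \in S by rewrite in_fsetD1 fe.
have := rank_fset1U_le (fsubset_trans (fsubD1set S f) SE) (fsubsetP SE f fS).
have := rank_le_card (fsubset_trans (fsubD1set X f) XE).
have := cardfsD1 f X; rewrite fX cardX.
have := noF f fX; rewrite fe XfeE (fsetD1K fS) /= -ltnNge.
rewrite rS; move: (r (S `\ f)) (r (X `\ f)) (#|` S|) (#|` X `\ f|) => a b c m; lia.
Qed.

(* [A] and its complement form a vertical [k']-separation for the [k'] that makes the
   defining inequality tight. *)
Lemma vert_connected_fsetD k A : vert_connected E r k -> A `<=` E ->
  r A < r E -> r (E `\` A) < r E -> k <= (r A + r (E `\` A)).+1 - r E.
Proof.
move=> [_ hk] AE ltA ltD; rewrite leqNgt; apply/negP => lt.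
have AUD : A `|` (E `\` A) = E by rewrite -{2}(fsetID A E) (fsetIidPr AE).
have AID : A `&` (E `\` A) = fset0 by rewrite fsetIDA (fsetIidPl AE) fsetDv.
have sub : r E <= r A + r (E `\` A) by rewrite -{1}AUD rank_fsetU_le ?fsubsetDl.
apply: (hk ((r A + r (E `\` A)).+1 - r E) A (E `\` A)).
  by rewrite lt andbT subn_gt0 ltnS.
by split => //; move: sub ltA ltD; move: (r E) (r A) (r (E `\` A)) => a b c; lia.
Qed.

End MatroidRank.

Definition star (X : graph) (v : nat) : graph := [fset e in X | v \in e].

Lemma in_star X v e : (e \in star X v) = (e \in X) && (v \in e).
Proof. by rewrite !inE. Qed.

Lemma star_sub X v : star X v `<=` X.
Proof. by apply/fsubsetP => e; rewrite in_star => /andP[]. Qed.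

Lemma deg_star X v : deg X v = #|` star X v|.
Proof. by []. Qed.

Lemma deg_sub H G v : H `<=` G -> deg H v <= deg G v.
Proof.
move=> /fsubsetP HG; apply: fsubset_leq_card; apply/fsubsetP => e.
by rewrite !in_star => /andP[/HG -> ->].
Qed.

Lemma is_graph_sub G H : is_graph G -> H `<=` G -> is_graph H.
Proof. by move=> hG /fsubsetP HG e /HG; apply: hG. Qed.

Lemma in_verts (G : graph) v : reflect (exists2 e, e \in G & v \in e) (v \in verts G).
Proof.
apply: (iffP (bigfcupP _ _ _ _)) => [[e /andP[eG _] ve]|[e eG ve]]; first by exists e.
by exists e; rewrite ?eG.
Qed.

Lemma deg_gt0 G v : v \in verts G -> 0 < deg G v.
Proof.
by case/in_verts => e eG ve; rewrite deg_star cardfs_gt0; apply/fset0Pn; exists e; rewrite in_star eG.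
Qed.

Lemma exists_mindeg G v0 : v0 \in verts G ->
  exists2 v, v \in verts G & mindeg_ge G (deg G v).
Proof.
move=> v0G.
have [x _ hx] := arg_minnP (fun x : verts G => deg G (val x)) (isT : predT (FSetSub v0G)).
by exists (val x) => [|w wG]; [exact: valP | exact: (hx (FSetSub wG))].
Qed.

Lemma edge2_eq (e : edge) u v : #|` e| = 2 -> u \in e -> v \in e -> u != v ->
  e = [fset u; v].
Proof.
move=> he ue ve uv; apply/eqP; rewrite eq_sym eqEfcard fsubUset !fsub1set ue ve.
by rewrite cardfs2 uv he.
Qed.

Lemma edge2_other (e : edge) u : #|` e| = 2 -> u \in e ->
  exists2 w, w != u & e = [fset u; w].
Proof.
move=> he ue; have : #|` e `\ u| == 1 by move: (cardfsD1 u e); rewrite ue he add1n => -[<-].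
case/cardfs1P => w ew; have : w \in e `\ u by rewrite ew fset11.
by rewrite in_fsetD1 => /andP[wu we]; exists w => //; apply: edge2_eq; rewrite // eq_sym.
Qed.

Lemma deg_lt_verts G v : is_graph G -> v \in verts G -> deg G v < #|` verts G|.
Proof.
move=> hG vG.
have other_inj : {in star G v &, injective (fun e : edge => e `\ v)}.
  move=> e1 e2; rewrite !in_star => /andP[_ v1] /andP[_ v2] h.
  by rewrite -(fsetD1K v1) h fsetD1K.
have other_sub : (fun e : edge => e `\ v) @` star G v `<=` (fun u => [fset u]) @` (verts G `\ v).
  apply/fsubsetP => x /imfsetP [e /= /[!in_star] /andP[eG ve] ->].
  have [w wv ee] := edge2_other (hG e eG) ve.
  apply/imfsetP; exists w => /=.
    by rewrite in_fsetD1 wv; apply/in_verts; exists e; rewrite // ee fset22.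
  apply/fsetP => z; rewrite ee !inE.
  by case: (eqVneq z v) => [->|zv]; rewrite ?eqxx ?(eq_sym v) ?(negbTE wv) ?(negbTE zv).
have := fsubset_leq_card other_sub.
move/card_in_imfsetP/eqP: other_inj => ->.
have /card_in_imfsetP/eqP -> : {in verts G `\ v &, injective (fun u : nat => [fset u])}.
  by move=> x y _ _; apply: fset1_inj.
by rewrite (cardfsD1 v (verts G)) vG.
Qed.

Lemma deg_fset1U_star G g u v : is_graph G -> u != v -> deg (g |` star G v) u <= 2.
Proof.
move=> hG uv; apply: leq_trans (_ : #|` [fset g; [fset u; v]]| <= 2); last first.
  by rewrite cardfs2; case: (_ != _).
apply: fsubset_leq_card; apply/fsubsetP => f.
rewrite in_star => /andP[/fset1UP[-> _ | /[!in_star] /andP[fG vf] uf]]; first exact: fset21.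
by rewrite (edge2_eq (hG f fG) uf vf uv) fset22.
Qed.

Lemma in_Kn n (g : edge) :
  reflect (exists a b, [/\ a < b, b < n & g = [fset a; b]]) (g \in Kn n).
Proof.
apply: (iffP idP) => [/imfsetP[p /[!inE] /[!mem_filter] /andP[ab] /allpairsP[[a b] [ha hb pE]] ->]|].
  by exists a, b; move: ha hb ab; rewrite pE !mem_iota.
case=> a [b [ab bn ->]]; apply/imfsetP; exists (a, b) => //=; rewrite inE mem_filter /= ab /=.
by apply/allpairsP; exists (a, b); rewrite !mem_iota /= (ltn_trans ab bn) bn.
Qed.

Lemma Kn_edge n a b : a != b -> a < n -> b < n -> [fset a; b] \in Kn n.
Proof.
move=> ab an bn; case: (ltngtP a b) => [lt|lt|e]; last by rewrite e eqxx in ab.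
  by apply/in_Kn; exists a, b.
by rewrite fsetUC; apply/in_Kn; exists b, a.
Qed.

Lemma Kn_graph n : is_graph (Kn n).
Proof. by move=> g /in_Kn [a [b [ab _ ->]]]; rewrite cardfs2 neq_ltn ab. Qed.

Lemma Kn_mono m n : m <= n -> Kn m `<=` Kn n.
Proof.
move=> mn; apply/fsubsetP => g /in_Kn [a [b [ab bm ->]]].
by apply/in_Kn; exists a, b; split => //; apply: leq_trans mn.
Qed.

Lemma gimgS f X Y : X `<=` Y -> gimg f X `<=` gimg f Y.
Proof. by move=> /fsubsetP XY; apply/subset_imfset. Qed.

Lemma verts_sub X Y : X `<=` Y -> verts X `<=` verts Y.
Proof.
move=> /fsubsetP XY; apply/fsubsetP => v /in_verts[e eX ve].
by apply/in_verts; exists e; rewrite ?XY.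
Qed.

Lemma edge_split G a : is_graph G -> a \in G ->
  exists p q, [/\ p != q, p \in verts G, q \in verts G & a = [fset p; q]].
Proof.
move=> hG aG; have : a != fset0 by rewrite -cardfs_gt0 hG.
case/fset0Pn => p pa; have [q qp ae] := edge2_other (hG a aG) pa.
exists p, q; split; rewrite 1?eq_sym //; apply/in_verts; exists a; rewrite // ae.
exact: fset22.
Qed.

Lemma gimg_sub_Kn C f n : is_graph C -> {in verts C &, injective f} ->
  {in verts C, forall z, f z < n} -> gimg f C `<=` Kn n.
Proof.
move=> hC inj fn; apply/fsubsetP => b /imfsetP[a aC ->].
have [p [q [pq pC qC ->]]] := edge_split hC aC.
rewrite imfset_fset2; apply: Kn_edge; rewrite ?fn //.
by apply: contra pq => /eqP/inj ->.
Qed.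

Lemma relabel_pendant (V : {fset nat}) u w x n : u != w -> x < n -> #|` V| < n ->
  exists f : nat -> nat,
    [/\ {in V &, injective f}, f u = n, f w = x & {in V, forall z, z != u -> f z < n}].
Proof.
move=> uw xn Vn.
pose f z := if z == u then n else if z == w then x else bump x (index z V).
have fu : f u = n by rewrite /f eqxx.
have fw : f w = x by rewrite /f eq_sym (negbTE uw) eqxx.
have fother z : z \in V -> z != u -> z != w -> f z = bump x (index z V).
  by move=> _ zu zw; rewrite /f (negbTE zu) (negbTE zw).
have bump_lt z : z \in V -> bump x (index z V) < n.
  move=> zV; apply: leq_ltn_trans (leq_add (leq_b1 _) (leqnn _)) _.
  by rewrite add1n; apply: leq_ltn_trans Vn; rewrite index_mem.
have flt z : z \in V -> z != u -> f z < n.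
  by move=> zV zu; case: (eqVneq z w) => [->|zw]; rewrite ?fw ?fother ?bump_lt.
have f_eq_n z : z \in V -> f z = n -> z = u.
  by move=> zV; case: (eqVneq z u) => // zu fz; move: (flt z zV zu); rewrite fz ltnn.
have f_eq_x z : z \in V -> f z = x -> z = w.
  move=> zV; case: (eqVneq z u) => [->|zu]; first by rewrite fu => nx; move: xn; rewrite nx ltnn.
  by case: (eqVneq z w) => // zw; rewrite fother // => /eqP; rewrite eq_sym (negbTE (neq_bump _ _)).
exists f; split => // z1 z2 z1V z2V e12.
case: (eqVneq z1 u) => [z1u|z1u]; first by rewrite (f_eq_n z2) // -e12 z1u.
case: (eqVneq z1 w) => [z1w|z1w]; first by rewrite (f_eq_x z2) // -e12 z1w.
have z2u : z2 != u by apply: contra z1u => /eqP z2u; rewrite (f_eq_n z1) // e12 z2u.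
have z2w : z2 != w by apply: contra z1w => /eqP z2w; rewrite (f_eq_x z1) // e12 z2w.
move: e12; rewrite !fother // => /(can_inj (bumpK x)).
exact: index_inj.
Qed.

Section GraphMatroidFamily.

Variable M : graph -> graph -> nat.
Hypothesis hM : graph_matroid_family M.

Lemma matroid_of_graph G : is_graph G -> matroid_rank G (M G).
Proof. by case: hM => h _ _; apply: h. Qed.

Lemma rank_restrict G H X : is_graph G -> H `<=` G -> X `<=` H -> M H X = M G X.
Proof. by case: hM => _ _ h hG HG; apply: h. Qed.

Lemma grank_restrict G X : is_graph G -> X `<=` G -> grank M X = M G X.
Proof. by move=> hG XG; apply: rank_restrict. Qed.

Lemma rank_gimg C H f X : is_graph C -> is_graph H -> {in verts C &, injective f} ->
  gimg f C `<=` H -> X `<=` C -> M H (gimg f X) = M C X.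
Proof.
move=> hC hH inj CH XC; case: hM => _ iso _.
by rewrite -(rank_restrict hH CH) ?iso //; apply: gimgS.
Qed.

Lemma grank_mono G H : is_graph G -> H `<=` G -> grank M H <= grank M G.
Proof.
move=> hG HG; rewrite (grank_restrict hG HG).
exact: (rank_mono (matroid_of_graph hG) HG (fsubset_refl G)).
Qed.

Lemma spans_gimg C H f X e : is_graph C -> is_graph H -> {in verts C &, injective f} ->
  gimg f C `<=` H -> X `<=` C -> e \in C -> spans (M C) X e -> spans (M H) (gimg f X) (f @` e).
Proof.
move=> hC hH inj CH XC eC; rewrite /spans.
have -> : (f @` e) |` gimg f X = gimg f (e |` X) by rewrite /gimg imfsetU1.
by rewrite !(rank_gimg hC hH inj CH) // fsubUset fsub1set eC.
Qed.

Lemma is_circuitP G C : is_graph G -> C `<=` G -> is_circuit M C <-> circuit (M G) C.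
Proof.
move=> hG CG; have CfG f : C `\ f `<=` G := fsubset_trans (fsubD1set C f) CG.
rewrite /is_circuit /circuit (grank_restrict hG CG).
split=> [[_ hC hCf] | [hC hCf]].
  by split=> // f fC; rewrite -(grank_restrict hG (CfG f)) hCf.
split=> // [|f fC]; first exact: is_graph_sub CG.
by rewrite (grank_restrict hG (CfG f)) hCf.
Qed.

Lemma is_circuit_through G X e : is_graph G -> X `<=` G -> e \in X ->
  M G X <= M G (X `\ e) -> exists C, [/\ C `<=` X, e \in C & is_circuit M C].
Proof.
move=> hG XG eX hX.
have [C [CX eC hC]] := circuit_of_not_coloop (matroid_of_graph hG) XG eX hX.
by exists C; split; rewrite // (is_circuitP hG (fsubset_trans CX XG)).
Qed.

Variable d : nat.
Hypothesis hd : dimensionality M d.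

Lemma circuit_deg_ge C v : is_circuit M C -> v \in verts C -> d.+1 <= deg C v.
Proof.
case: hd => _ hmin hC vC; have [w wC hw] := exists_mindeg vC.
by apply: leq_trans (hw v vC); apply: hmin hC _; split; last by exists w.
Qed.

Lemma coloop_of_deg_le G X e v : is_graph G -> X `<=` G -> e \in X -> v \in e ->
  deg X v <= d -> M G (X `\ e) < M G X.
Proof.
move=> hG XG eX ve hv; rewrite ltnNge; apply/negP => /(is_circuit_through hG XG eX).
case=> C [CX eC hC]; have vC : v \in verts C by apply/in_verts; exists e.
by have := leq_trans (circuit_deg_ge hC vC) (leq_trans (deg_sub v CX) hv); rewrite ltnn.
Qed.

(* Deleting the star of [v] loses at least [min (deg X v) d] in rank: while at most [d] edges
   remain at [v], each of them is a coloop. *)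
Lemma rank_fsetD_star G X v : is_graph G -> X `<=` G ->
  M G (X `\` star X v) + minn (deg X v) d <= M G X.
Proof.
move=> hG XG; have hr := matroid_of_graph hG.
move Xn : (deg X v) => n; elim: n X Xn XG => [|n IH] X Xn XG.
  by rewrite min0n addn0; exact: (rank_mono hr (fsubsetDl X _) XG).
have : star X v != fset0 by rewrite -cardfs_gt0 -deg_star Xn.
case/fset0Pn => g /[!in_star] /andP[gX vg].
have XgG : X `\ g `<=` G := fsubset_trans (fsubD1set X g) XG.
have starXg : star (X `\ g) v = star X v `\ g.
  by apply/fsetP => z; rewrite !(in_fsetD1, in_star) andbA.
have Xgn : deg (X `\ g) v = n.
  by move: Xn; rewrite !deg_star starXg (cardfsD1 g (star X v)) in_star gX vg => -[].
have <- : (X `\ g) `\` star (X `\ g) v = X `\` star X v.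
  apply/fsetP => z; rewrite starXg !inE.
  by case: (z =P g) => [->|]; rewrite ?gX ?vg //; case: (z \in X); case: (v \in z).
have := IH _ Xgn XgG; have := rank_mono hr (fsubD1set X g) XG.
have [nd|dn] := ltnP n d; last by rewrite !minnE; lia.
have Xd : deg X v <= d by rewrite Xn.
have := coloop_of_deg_le hG XG gX vg Xd; rewrite !minnE; lia.
Qed.

(* A neighbour [u] of [v] has an edge [g] avoiding [v]; [u] has degree at most [2 <= d] in
   [g |` star G v], so [g] is a coloop there and is not spanned by [star G v]. *)
Lemma rank_star_lt G v : is_graph G -> v \in verts G -> mindeg_ge G (deg G v) ->
  1 < deg G v -> 1 < d -> M G (star G v) < M G G.
Proof.
move=> hG vG vmin Dv d1.
have /fset0Pn[e /[!in_star] /andP[eG ve]] : star G v != fset0.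
  by rewrite -cardfs_gt0 -deg_star ltnW.
have [u uv ee] := edge2_other (hG e eG) ve.
have uG : u \in verts G by apply/in_verts; exists e; rewrite // ee fset22.
have /fset0Pn[g /[!(in_fsetD1, in_star)] /andP[ge /andP[gG ug]]] : star G u `\ e != fset0.
  rewrite -cardfs_gt0; have := vmin u uG.
  by rewrite [deg G u]deg_star (cardfsD1 e) in_star eG ee fset22; lia.
have vg : v \notin g.
  by apply: contra ge => vg; rewrite ee (edge2_eq (hG g gG) vg ug) // eq_sym.
have XG : g |` star G v `<=` G by rewrite fsubUset fsub1set gG star_sub.
have := coloop_of_deg_le hG XG (fset1U1 _ _) ug (leq_trans (deg_fset1U_star g hG uv) d1).
rewrite fsetU1K ?in_star ?(negbTE vg) ?andbF // => lt.
exact: (leq_trans lt (rank_mono (matroid_of_graph hG) XG (fsubset_refl G))).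
Qed.

End GraphMatroidFamily.

Section PendantCircuit.

Variable M : graph -> graph -> nat.
Hypothesis hM : graph_matroid_family M.
Variables (C : graph) (u : nat).
Hypotheses (hC : is_circuit M C) (du : deg C u = 1).

(* Relabel [C] so that its pendant edge [uw] lands on [nx] and the rest of [C] on [0..n-1];
   since [C - uw] spans [uw], the new edge [nx] of [Kn n.+1] is spanned by [Kn n]. *)
Lemma pendant_spans_Kn n x : #|` verts C| < n -> x < n -> spans (M (Kn n.+1)) (Kn n) [fset n; x].
Proof.
move=> Cn xn; have hCg : is_graph C by case: hC.
have /cardfs1P[e starCu] : #|` star C u| == 1 by rewrite -deg_star du.
have /[!in_star] /andP[eC ue] : e \in star C u by rewrite starCu fset11.
have [w wu ee] := edge2_other (hCg e eC) ue.
have C0C : C `\ e `<=` C := fsubD1set C e.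
have uC0 : u \notin verts (C `\ e).
  apply/in_verts => -[a /[!in_fsetD1] /andP[ae aC] ua].
  have : a \in star C u by rewrite in_star aC ua.
  by rewrite starCu => /fset1P aeq; rewrite aeq eqxx in ae.
have spans_e : spans (M C) (C `\ e) e.
  have Ccirc := (is_circuitP hM hCg (fsubset_refl C)).1 hC.
  exact: (circuit_spans (matroid_of_graph hM hCg) (fsubset_refl C) Ccirc eC).
have uw : u != w by rewrite eq_sym.
have [f [inj fu fw flt]] := relabel_pendant uw xn Cn.
have CK : gimg f C `<=` Kn n.+1.
  apply: gimg_sub_Kn hCg inj _ => z zC.
  by case: (eqVneq z u) => [->|zu]; rewrite ?fu // ltnS ltnW ?flt.
have C0K : gimg f (C `\ e) `<=` Kn n.
  have C0V := verts_sub C0C.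
  apply: gimg_sub_Kn (is_graph_sub hCg C0C) (sub_in2 (fsubsetP C0V) inj) _ => z zC0.
  by apply: flt; [exact: (fsubsetP C0V) | apply: contraNneq uC0 => <-].
have := spans_gimg hM hCg (@Kn_graph n.+1) inj CK C0C eC spans_e.
have -> : f @` e = [fset n; x] by rewrite ee imfset_fset2 fu fw.
move=> spans_nx.
have hr := matroid_of_graph hM (@Kn_graph n.+1).
have nxK : [fset n; x] \in Kn n.+1.
  by apply: Kn_edge; [rewrite neq_ltn xn orbT | exact: ltnSn | exact: ltnW].
exact: (spansS hr C0K (Kn_mono (leqnSn n)) nxK spans_nx).
Qed.

Lemma grank_Kn_succ n : #|` verts C| < n -> grank M (Kn n.+1) = grank M (Kn n).
Proof.
move=> Cn; have hr := matroid_of_graph hM (@Kn_graph n.+1).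
have KnS := Kn_mono (leqnSn n).
rewrite (grank_restrict hM (@Kn_graph n.+1) KnS) /grank.
transitivity (M (Kn n.+1) (Kn n `|` Kn n.+1)); first by rewrite (fsetUidPr _ _ KnS).
apply: (rank_fsetU_spans hr KnS (fsubset_refl _)) => g /in_Kn[a [b [ab bn ->]]].
have [bn'|nb] := ltnP b n; first by apply/spans_mem/in_Kn; exists a, b.
have bE : b = n by apply/eqP; rewrite eqn_leq nb -ltnS bn.
by rewrite bE fsetUC in ab *; apply: pendant_spans_Kn.
Qed.

Lemma grank_Kn_bounded n : grank M (Kn n) <= grank M (Kn #|` verts C|.+1).
Proof.
elim: n => [|n IH]; first exact: (grank_mono hM (@Kn_graph _) (Kn_mono (leq0n _))).
have [le|lt] := leqP n.+1 #|` verts C|.+1.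
  exact: (grank_mono hM (@Kn_graph _) (Kn_mono le)).
by rewrite grank_Kn_succ.
Qed.

End PendantCircuit.

Lemma dimensionality_gt0 M d : graph_matroid_family M -> unbounded M ->
  dimensionality M d -> 0 < d.
Proof.
move=> hM hunb [[C [hC [_ [u _ du]]]] _]; rewrite lt0n; apply/eqP => d0.
rewrite d0 in du; have [n] := hunb (grank M (Kn #|` verts C|.+1)).
by rewrite ltnNge (grank_Kn_bounded hM hC du).
Qed.

Theorem lemma3p4 (M : graph -> graph -> nat) (d k : nat) (G : graph) :
  graph_matroid_family M -> nontrivial M -> unbounded M ->
  dimensionality M d -> 2 <= k -> is_graph G ->
  vert_connected G (M G) k ->
  mindeg_ge G (k + d - 1) /\ k + d <= #|` verts G|.
Proof.
move=> hM _ hunb hd k2 hG hGk; have hr := matroid_of_graph hM hG.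
have d_gt0 := dimensionality_gt0 hM hunb hd.
have k_le_rG : k <= M G G by case: hGk.
have [v0 v0G] : exists v0, v0 \in verts G.
  have /fset0Pn[e eG] : G != fset0.
    by rewrite -cardfs_gt0; apply: leq_trans (rank_le_card hr (fsubset_refl G)); lia.
  by have [p [q [_ pG _ _]]] := edge_split hG eG; exists p.
have [v vG vmin] := exists_mindeg v0G.
suff Dk : k + d - 1 <= deg G v.
  split=> [w /vmin|]; first exact: leq_trans.
  by have := deg_lt_verts hG vG; lia.
rewrite leqNgt; apply/negP => Dlt.
have rE1 := rank_le_card hr (star_sub G v); rewrite -deg_star in rE1.
have rE2 := rank_fsetD_star hM hd v hG (fsubset_refl G).
have D_gt0 := deg_gt0 vG.
have lt1 : M G (star G v) < M G G.
  have := rank_star_lt hM hd hG vG vmin.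
  by case: (ltnP (M G (star G v)) (M G G)) => // le1; apply; lia.
have lt2 : M G (G `\` star G v) < M G G by move: rE2; rewrite minnE; lia.
have := vert_connected_fsetD hr hGk (star_sub G v) lt1 lt2.
move: Dlt D_gt0 d_gt0 k2 rE1 rE2; rewrite !minnE.
by move: (M G G) (M G (star G v)) (M G (G `\` star G v)) (deg G v) => a b c D; lia.
Qed.
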